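(* Let $X$ and $Y$ be random variables with values in $\mathbb{N}=\{0,1,2,\dots\}$ such that $P\{X=0\}\neq 1$, $P\{Y=0\}\neq1$, and let $\hat p_X(z)=\mathbb{E}[z^X]$, $\hat p_Y(z)=\mathbb{E}[z^Y]$ for $z\in[0,1]$. Let $f_0$ be a probability density on $\mathbb{N}$ with probability generating function $\hat f_0(z)=\sum_{v\ge0}z^vf_0(v)$. Then the initial value problem $$\frac{\partial}{\partial t}\hat f_t(z)=\hat f_t(\hat p_X(z))\,\hat f_t(\hat p_Y(z))-\hat f_t(z),\qquad z\in[0,1],\ t>0,$$ with initial datum $\hat f_0$, has a unique global solution. For any $t>0$ this solution can be written as $$\hat f_t(z)=e^{-t}\sum_{n\ge0}(1-e^{-t})^n\,\hat q_n(z),$$ where $\hat q_0=\hat f_0$ and, for $n\ge1$, $$\hat q_n(z)=\frac1n\sum_{j=0}^{n-1}\hat q_j(\hat p_X(z))\,\hat q_{n-1-j}(\hat p_Y(z)).$$ Moreover, $\hat f_t$ is the probability generating function of a probability density on $\mathbb{N}$ for every $t>0$.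
   Context: This equation is the probability-generating-function form of the Boltzmann-type equation $\partial_t f_t(v)=Q^+(f_t,f_t)(v)-f_t(v)$, $v\in\mathbb{N}$, where for probability densities $f,g$ on $\mathbb{N}$, $Q^+(f,g)(v)=P\{\sum_{i=1}^{V_1}Y_i+\sum_{i=1}^{V_2}X_i=v\}$ with $V_1\sim f$, $V_2\sim g$, $X_i$ i.i.d. with the law of $X$, $Y_i$ i.i.d. with the law of $Y$, all independent. *)

From Stdlib Require Import Reals List.
From Coquelicot Require Import Coquelicot.
Open Scope R_scope.

Definition is_density (f : nat -> R) : Prop :=
  (forall v, 0 <= f v) /\ is_series f 1.

Definition pgf (f : nat -> R) (z : R) : R := Series (fun v => f v * z ^ v).

Fixpoint qlist (pXh pYh f0h : R -> R) (n : nat) : list (R -> R) :=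
  match n with
  | O => f0h :: nil
  | S m =>
      let L := qlist pXh pYh f0h m in
      L ++ ((fun z => / INR (S m) *
               sum_f_R0 (fun j => nth j L (fun _ => 0) (pXh z) *
                                  nth (m - j) L (fun _ => 0) (pYh z)) m) :: nil)
  end.

Definition qhat (pXh pYh f0h : R -> R) (n : nat) : R -> R :=
  nth n (qlist pXh pYh f0h n) (fun _ => 0).

Definition is_solution (pXh pYh f0h : R -> R) (F : R -> R -> R) : Prop :=
  (forall z, 0 <= z <= 1 -> F 0 z = f0h z) /\
  (forall z, 0 <= z <= 1 -> filterlim (fun t => F t z) (at_right 0) (locally (F 0 z))) /\
  (forall t z, 0 < t -> 0 <= z <= 1 ->
     is_derive (fun s => F s z) t (F t (pXh z) * F t (pYh z) - F t z)) /\
  (forall T, 0 < T -> exists M, forall t z, 0 <= t <= T -> 0 <= z <= 1 -> Rabs (F t z) <= M).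

From Stdlib Require Import Reals Lra Lia List IndefiniteDescription.
From Coquelicot Require Import Coquelicot.
Open Scope R_scope.

(* With u = 1 - e^{-t}, the recursion defining q_n says exactly that the derivative
   of A(u) = \sum_n q_n(z) u^n is the Cauchy product A_X(u) A_Y(u) of the same series
   at pX(z) and pY(z); hence e^{-t} A(1 - e^{-t}) solves the equation.  Generating
   functions of finite measures on N are closed under sums, products, mixtures and
   composition with a pgf, so each q_n is the pgf of a probability density and the
   solution, a geometric mixture of the q_n, is one too.  For uniqueness, the
   difference D of two solutions bounded by M satisfies |d/dt D| <= (2M+1) sup|D|;
   on a time strip of length 1/(2(2M+1)) starting where D vanishes this gives
   sup|D| <= sup|D| / 2, so D vanishes strip after strip. *)

(** * Series with nonnegative terms *)

Lemma is_series_le_compat (a b : nat -> R) la lb :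
  (forall n, a n <= b n) -> is_series a la -> is_series b lb -> la <= lb.
Proof.
  intros Hab Ha Hb.
  apply (is_lim_seq_le (sum_n a) (sum_n b) la lb); [|exact Ha|exact Hb].
  intro n. apply sum_n_m_le, Hab.
Qed.

Lemma is_series_le_of_partial (a : nat -> R) l c :
  is_series a l -> (forall n, sum_n a n <= c) -> l <= c.
Proof.
  intros Ha Hc.
  apply (is_lim_seq_le (sum_n a) (fun _ => c) l c Hc Ha), is_lim_seq_const.
Qed.

Section NonnegSeries.

Variable a : nat -> R.
Hypothesis a_ge0 : forall n, 0 <= a n.

Lemma sum_n_le_nonneg n m : (n <= m)%nat -> sum_n a n <= sum_n a m.
Proof.
  induction 1 as [|m _ IH]; [lra|].
  rewrite sum_Sn. specialize (a_ge0 (S m)). simpl. unfold plus; simpl. lra.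
Qed.

Lemma sum_n_ge_term n : a n <= sum_n a n.
Proof.
  destruct n as [|n]; [rewrite sum_O; lra|].
  rewrite sum_Sn. simpl. unfold plus; simpl.
  pose proof (sum_n_le_nonneg 0 n (Nat.le_0_l n)) as H. rewrite sum_O in H.
  specialize (a_ge0 O). lra.
Qed.

Lemma is_series_partial_le l : is_series a l -> forall n, sum_n a n <= l.
Proof.
  intros Hl n.
  apply (is_lim_seq_le_loc (fun _ => sum_n a n) (sum_n a) (sum_n a n) l);
    [|apply is_lim_seq_const|exact Hl].
  exists n. intros m Hm. apply sum_n_le_nonneg, Hm.
Qed.

Lemma is_series_term_le l : is_series a l -> forall n, a n <= l.
Proof.
  intros Hl n. eapply Rle_trans; [apply sum_n_ge_term|]. apply is_series_partial_le, Hl.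
Qed.

Lemma is_series_ge0 l : is_series a l -> 0 <= l.
Proof. intro Hl. eapply Rle_trans; [apply (a_ge0 O)|]. apply (is_series_term_le l Hl). Qed.

Lemma ex_series_of_partial_bounded c : (forall n, sum_n a n <= c) -> ex_series a.
Proof.
  intro Hc.
  assert (Hincr : forall n, sum_n a n <= sum_n a (S n)) by (intro; apply sum_n_le_nonneg; lia).
  destruct (ex_finite_lim_seq_incr (sum_n a) c Hincr Hc) as [l Hl].
  exists l. exact Hl.
Qed.

End NonnegSeries.

Lemma is_series_sum_n_swap (a : nat -> nat -> R) N :
  (forall v, ex_series (fun n => a n v)) ->
  is_series (fun n => sum_n (a n) N) (sum_n (fun v => Series (fun n => a n v)) N).
Proof.
  intro Ha. induction N as [|N IH].
  - rewrite sum_O. eapply is_series_ext; [|apply Series_correct, Ha].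
    intro n. now rewrite sum_O.
  - rewrite sum_Sn.
    eapply is_series_ext; [|apply (is_series_plus _ (fun n => a n (S N)) _ _ IH), Series_correct, Ha].
    intro n. now rewrite sum_Sn.
Qed.

Lemma is_series_swap_nonneg (a : nat -> nat -> R) (b : nat -> R) l :
  (forall n v, 0 <= a n v) -> (forall n, is_series (a n) (b n)) -> is_series b l ->
  (forall v, ex_series (fun n => a n v)) /\
  is_series (fun v => Series (fun n => a n v)) l.
Proof.
  intros Ha Hab Hb.
  assert (Hcol : forall v, ex_series (fun n => a n v)).
  { intro v. apply (@ex_series_le R_AbsRing R_CompleteNormedModule _ b); [|now exists l].
    intro n. change (Rabs (a n v) <= b n). rewrite Rabs_pos_eq by apply Ha.
    apply (is_series_term_le (a n) (Ha n) _ (Hab n)). }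
  split; [exact Hcol|].
  set (T := fun v => Series (fun n => a n v)).
  assert (HT : forall v, is_series (fun n => a n v) (T v)) by (intro v; apply Series_correct, Hcol).
  assert (HT0 : forall v, 0 <= T v) by (intro v; exact (is_series_ge0 _ (fun n => Ha n v) _ (HT v))).
  assert (HTl : forall N, sum_n T N <= l).
  { intro N. refine (is_series_le_compat _ b _ _ _ (is_series_sum_n_swap a N Hcol) Hb).
    intro n. apply (is_series_partial_le (a n) (Ha n) _ (Hab n)). }
  assert (HTex : ex_series T) by exact (ex_series_of_partial_bounded T HT0 l HTl).
  assert (HlT : l <= Series T).
  { apply (is_series_le_of_partial b l _ Hb). intro N.
    assert (Hrow : forall n, ex_series (a n)) by (intro n; now exists (b n)).
    pose proof (is_series_sum_n_swap (fun v n => a n v) N Hrow) as Hswap.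
    rewrite (sum_n_ext _ b) in Hswap by (intro n; apply is_series_unique, Hab).
    refine (is_series_le_compat _ T _ _ _ Hswap (Series_correct _ HTex)).
    intro v. apply (is_series_partial_le _ (fun n => Ha n v) _ (HT v)). }
  replace l with (Series T); [now apply Series_correct|].
  apply Rle_antisym; [|exact HlT].
  apply (is_series_le_of_partial T _ l (Series_correct _ HTex) HTl).
Qed.

(** * Generating functions of finite measures on N *)

Lemma pow_unit_interval z n : 0 <= z <= 1 -> 0 <= z ^ n <= 1.
Proof. intro Hz. split; [apply pow_le; lra|rewrite <- (pow1 n); apply pow_incr; lra]. Qed.

Section PgfOfNonnegSeries.

Variables (g : nat -> R) (s : R).
Hypotheses (g_ge0 : forall v, 0 <= g v) (g_mass : is_series g s).

Lemma pgf_term_bounds z v : 0 <= z <= 1 -> 0 <= g v * z ^ v <= g v.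
Proof.
  intro Hz. destruct (pow_unit_interval z v Hz). specialize (g_ge0 v).
  split; [apply Rmult_le_pos; lra|]. rewrite <- (Rmult_1_r (g v)) at 2.
  apply Rmult_le_compat_l; lra.
Qed.

Lemma is_series_pgf z : 0 <= z <= 1 -> is_series (fun v => g v * z ^ v) (pgf g z).
Proof.
  intro Hz. apply Series_correct, (@ex_series_le R_AbsRing R_CompleteNormedModule _ g); [|now exists s].
  intro v. change (Rabs (g v * z ^ v) <= g v).
  destruct (pgf_term_bounds z v Hz). rewrite Rabs_pos_eq; lra.
Qed.

Lemma pgf_bounds z : 0 <= z <= 1 -> 0 <= pgf g z <= s.
Proof.
  intro Hz. split.
  - apply (is_series_ge0 (fun v => g v * z ^ v)); [|now apply is_series_pgf].
    intro v. apply (pgf_term_bounds z v Hz).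
  - apply (is_series_le_compat _ g _ _ (fun v => proj2 (pgf_term_bounds z v Hz)));
      [now apply is_series_pgf|exact g_mass].
Qed.

End PgfOfNonnegSeries.

Lemma pgf_unit_interval p z : is_density p -> 0 <= z <= 1 -> 0 <= pgf p z <= 1.
Proof. intros [Hp0 Hp1] Hz. exact (pgf_bounds p 1 Hp0 Hp1 z Hz). Qed.

Definition is_pgf_of_mass (s : R) (h : R -> R) : Prop :=
  exists g, (forall v, 0 <= g v) /\ is_series g s /\ forall z, 0 <= z <= 1 -> h z = pgf g z.

Lemma is_pgf_of_mass_pgf p : is_density p -> is_pgf_of_mass 1 (pgf p).
Proof. intros [Hp0 Hp1]. now exists p. Qed.

Lemma is_pgf_of_mass_ext s h h' :
  (forall z, 0 <= z <= 1 -> h z = h' z) -> is_pgf_of_mass s h -> is_pgf_of_mass s h'.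
Proof.
  intros E [g [Hg0 [Hg1 Hh]]]. exists g. repeat split; auto.
  intros z Hz. rewrite <- E; auto.
Qed.

Lemma is_pgf_of_mass_bounds s h z : is_pgf_of_mass s h -> 0 <= z <= 1 -> 0 <= h z <= s.
Proof. intros [g [Hg0 [Hg1 Hh]]] Hz. rewrite Hh by exact Hz. now apply (pgf_bounds g). Qed.

Lemma is_pgf_of_mass_scal c s h :
  0 <= c -> is_pgf_of_mass s h -> is_pgf_of_mass (c * s) (fun z => c * h z).
Proof.
  intros Hc [g [Hg0 [Hg1 Hh]]]. exists (fun v => c * g v). repeat split.
  - intro v. apply Rmult_le_pos; auto.
  - exact (is_series_scal_l c g s Hg1).
  - intros z Hz. rewrite Hh by exact Hz. unfold pgf. rewrite <- Series_scal_l.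
    apply Series_ext. intro v. ring.
Qed.

Lemma is_pgf_of_mass_plus s1 s2 h1 h2 :
  is_pgf_of_mass s1 h1 -> is_pgf_of_mass s2 h2 ->
  is_pgf_of_mass (s1 + s2) (fun z => h1 z + h2 z).
Proof.
  intros [g1 [Hg10 [Hg11 Hh1]]] [g2 [Hg20 [Hg21 Hh2]]].
  exists (fun v => g1 v + g2 v). repeat split.
  - intro v. specialize (Hg10 v). specialize (Hg20 v). lra.
  - exact (is_series_plus g1 g2 s1 s2 Hg11 Hg21).
  - intros z Hz. rewrite Hh1, Hh2 by exact Hz. symmetry. apply is_series_unique.
    eapply is_series_ext; [|apply (is_series_plus _ _ _ _ (is_series_pgf g1 s1 Hg10 Hg11 z Hz)
                                                        (is_series_pgf g2 s2 Hg20 Hg21 z Hz))].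
    intro v. simpl. unfold plus. simpl. ring.
Qed.

Lemma is_pgf_of_mass_sum (s : nat -> R) (h : nat -> R -> R) m :
  (forall j, (j <= m)%nat -> is_pgf_of_mass (s j) (h j)) ->
  is_pgf_of_mass (sum_f_R0 s m) (fun z => sum_f_R0 (fun j => h j z) m).
Proof.
  induction m as [|m IH]; intro Hh; simpl; [apply Hh; lia|].
  apply is_pgf_of_mass_plus; [apply IH; intros; apply Hh|apply Hh]; lia.
Qed.

Lemma is_pgf_of_mass_one : is_pgf_of_mass 1 (fun _ => 1).
Proof.
  set (d := fun v : nat => if Nat.eqb v 0 then 1 else 0).
  assert (Hd : forall a : nat -> R, is_series (fun v => d v * a v) (a O)).
  { intro a. change (is_lim_seq (sum_n (fun v => d v * a v)) (a O)).
    apply (is_lim_seq_ext (fun _ => a O)); [|apply is_lim_seq_const].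
    induction n as [|n IH]; [rewrite sum_O; unfold d; simpl; ring|].
    rewrite sum_Sn, <- IH. unfold d. simpl. unfold plus. simpl. ring. }
  exists d. repeat split.
  - intro v. unfold d. destruct (Nat.eqb v 0); lra.
  - eapply is_series_ext; [|apply (Hd (fun _ => 1))]. intro v. apply Rmult_1_r.
  - intros z Hz. symmetry. apply is_series_unique, (Hd (fun v => z ^ v)).
Qed.

Lemma is_pgf_of_mass_mult s1 s2 h1 h2 :
  is_pgf_of_mass s1 h1 -> is_pgf_of_mass s2 h2 ->
  is_pgf_of_mass (s1 * s2) (fun z => h1 z * h2 z).
Proof.
  intros [g1 [Hg10 [Hg11 Hh1]]] [g2 [Hg20 [Hg21 Hh2]]].
  exists (fun n => sum_f_R0 (fun k => g1 k * g2 (n - k)%nat) n). repeat split.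
  - intro n. apply cond_pos_sum. intro k. apply Rmult_le_pos; auto.
  - exact (is_series_mult_pos g1 g2 s1 s2 Hg11 Hg21 Hg10 Hg20).
  - intros z Hz. rewrite Hh1, Hh2 by exact Hz. symmetry. apply is_series_unique.
    eapply is_series_ext;
      [|apply (is_series_mult_pos _ _ _ _ (is_series_pgf g1 s1 Hg10 Hg11 z Hz)
                 (is_series_pgf g2 s2 Hg20 Hg21 z Hz));
        intro v; apply pgf_term_bounds; assumption].
    intro n. rewrite Rmult_comm, scal_sum. apply sum_eq. intros k Hk.
    replace (z ^ n) with (z ^ k * z ^ (n - k)) by (rewrite <- pow_add; f_equal; lia). ring.
Qed.

Lemma is_pgf_of_mass_pow h n : is_pgf_of_mass 1 h -> is_pgf_of_mass 1 (fun z => h z ^ n).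
Proof.
  intro Hh. induction n as [|n IH]; [exact is_pgf_of_mass_one|].
  rewrite <- (Rmult_1_r 1). exact (is_pgf_of_mass_mult _ _ _ _ Hh IH).
Qed.

Lemma is_pgf_of_mass_mix (c : nat -> R) s (h : nat -> R -> R) :
  (forall n, 0 <= c n) -> is_series c s -> (forall n, is_pgf_of_mass 1 (h n)) ->
  is_pgf_of_mass s (fun z => Series (fun n => c n * h n z)).
Proof.
  intros Hc0 Hc Hh.
  destruct (functional_choice _ Hh) as [g Hg].
  assert (Hg0 : forall n v, 0 <= g n v) by (intro n; apply Hg).
  assert (Hrow : forall n, is_series (fun v => c n * g n v) (c n)).
  { intro n. pose proof (is_series_scal_l (c n) (g n) 1 (proj1 (proj2 (Hg n)))) as Hn.
    change (scal (c n) 1) with (c n * 1) in Hn. rewrite Rmult_1_r in Hn. exact Hn. }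
  destruct (is_series_swap_nonneg (fun n v => c n * g n v) c s
              (fun n v => Rmult_le_pos _ _ (Hc0 n) (Hg0 n v)) Hrow Hc) as [Hcol Hmass].
  exists (fun v => Series (fun n => c n * g n v)). repeat split; [|exact Hmass|].
  - intro v. apply (is_series_ge0 (fun n => c n * g n v)); [|apply Series_correct, Hcol].
    intro n. apply Rmult_le_pos; auto.
  - intros z Hz.
    assert (Hhz : forall n, h n z = pgf (g n) z) by (intro n; apply Hg, Hz).
    assert (Hhb : forall n, 0 <= h n z <= 1)
      by (intro n; rewrite Hhz; apply (pgf_bounds (g n) 1); apply Hg || exact Hz).
    assert (Hex : ex_series (fun n => c n * h n z)).
    { apply (@ex_series_le R_AbsRing R_CompleteNormedModule _ c); [|now exists s].
      intro n. change (Rabs (c n * h n z) <= c n). specialize (Hhb n). specialize (Hc0 n).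
      rewrite Rabs_pos_eq by (apply Rmult_le_pos; lra). nra. }
    assert (Hrowz : forall n, is_series (fun v => c n * g n v * z ^ v) (c n * h n z)).
    { intro n. rewrite Hhz.
      pose proof (is_series_scal_l (c n) _ _ (is_series_pgf (g n) 1 (Hg0 n) (proj1 (proj2 (Hg n))) z Hz)) as Hn.
      eapply is_series_ext; [|exact Hn].
      intro v. simpl. unfold scal. simpl. unfold mult. simpl. ring. }
    destruct (is_series_swap_nonneg (fun n v => c n * g n v * z ^ v) _ _
                (fun n v => Rmult_le_pos _ _ (Rmult_le_pos _ _ (Hc0 n) (Hg0 n v))
                                         (proj1 (pow_unit_interval z v Hz)))
                Hrowz (Series_correct _ Hex)) as [_ Hz'].
    unfold pgf. symmetry. apply is_series_unique. eapply is_series_ext; [|exact Hz'].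
    intro v. simpl. rewrite <- Series_scal_r. reflexivity.
Qed.

Lemma is_pgf_of_mass_comp s h p :
  is_pgf_of_mass s h -> is_density p -> is_pgf_of_mass s (fun z => h (pgf p z)).
Proof.
  intros [g [Hg0 [Hg1 Hh]]] Hp.
  apply (is_pgf_of_mass_ext s (fun z => Series (fun v => g v * pgf p z ^ v))).
  - intros z Hz. rewrite Hh; [reflexivity|]. now apply pgf_unit_interval.
  - apply (is_pgf_of_mass_mix g s (fun v z => pgf p z ^ v)); auto.
    intro v. now apply is_pgf_of_mass_pow, is_pgf_of_mass_pgf.
Qed.

Section Qhat.

Variables pXh pYh f0h : R -> R.

Lemma qlist_length n : length (qlist pXh pYh f0h n) = S n.
Proof. induction n as [|n IH]; simpl; [reflexivity|]. rewrite length_app, IH. simpl. lia. Qed.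

Lemma nth_qlist n j : (j <= n)%nat -> nth j (qlist pXh pYh f0h n) (fun _ => 0) = qhat pXh pYh f0h j.
Proof.
  unfold qhat. induction n as [|n IH]; intro Hj.
  - now replace j with O by lia.
  - destruct (Nat.eq_dec j (S n)) as [->|Hne]; [reflexivity|].
    simpl qlist. rewrite app_nth1 by (rewrite qlist_length; lia). apply IH. lia.
Qed.

Lemma qhat_S n z :
  qhat pXh pYh f0h (S n) z =
  / INR (S n) * sum_f_R0 (fun j => qhat pXh pYh f0h j (pXh z) * qhat pXh pYh f0h (n - j) (pYh z)) n.
Proof.
  unfold qhat at 1. simpl qlist.
  rewrite app_nth2 by (rewrite qlist_length; lia). rewrite qlist_length, Nat.sub_diag. simpl.
  f_equal. apply sum_eq. intros j Hj. rewrite !nth_qlist by lia. reflexivity.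
Qed.

End Qhat.

Lemma qhat_is_pgf pX pY f0 n :
  is_density pX -> is_density pY -> is_density f0 ->
  is_pgf_of_mass 1 (qhat (pgf pX) (pgf pY) (pgf f0) n).
Proof.
  intros HX HY Hf0. set (q := qhat (pgf pX) (pgf pY) (pgf f0)).
  induction n as [|n IH] using Nat.strong_induction_le.
  - now apply is_pgf_of_mass_pgf.
  - apply (is_pgf_of_mass_ext 1
      (fun z => / INR (S n) * sum_f_R0 (fun j => q j (pgf pX z) * q (n - j)%nat (pgf pY z)) n));
      [intros z _; symmetry; apply qhat_S|].
    replace 1 with (/ INR (S n) * sum_f_R0 (fun _ => 1 * 1) n) at 1
      by (rewrite sum_cte; field; apply not_0_INR; lia).
    apply is_pgf_of_mass_scal; [left; apply Rinv_0_lt_compat, lt_0_INR; lia|].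
    apply (is_pgf_of_mass_sum (fun _ => 1 * 1)
             (fun j z => q j (pgf pX z) * q (n - j)%nat (pgf pY z))).
    intros j Hj. apply is_pgf_of_mass_mult; apply is_pgf_of_mass_comp; auto; apply IH; lia.
Qed.

(** * The explicit solution *)

Definition geom_mix (a : nat -> R) (t : R) : R := exp (- t) * PSeries a (1 - exp (- t)).

Lemma exp_neg_bounds t : 0 <= t -> 0 < exp (- t) <= 1.
Proof.
  intro Ht. split; [apply exp_pos|]. rewrite <- exp_0.
  destruct Ht as [Ht|<-]; [left; apply exp_increasing; lra|rewrite Ropp_0; lra].
Qed.

Lemma is_series_geom_weights t :
  0 <= t -> is_series (fun n => exp (- t) * (1 - exp (- t)) ^ n) 1.
Proof.
  intro Ht. pose proof (exp_neg_bounds t Ht) as He.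
  assert (Hq : Rabs (1 - exp (- t)) < 1) by (rewrite Rabs_pos_eq; lra).
  pose proof (is_series_scal_l (exp (- t)) _ _ (is_series_geom _ Hq)) as H.
  change (scal (exp (- t)) (/ (1 - (1 - exp (- t))))) with (exp (- t) * / (1 - (1 - exp (- t)))) in H.
  replace (exp (- t) * / (1 - (1 - exp (- t)))) with 1 in H
    by (replace (1 - (1 - exp (- t))) with (exp (- t)) by ring; field; lra).
  exact H.
Qed.

Lemma CV_radius_ge_1 (a : nat -> R) M : (forall n, Rabs (a n) <= M) -> Rbar_le 1 (CV_radius a).
Proof.
  intro Ha. apply (proj1 (CV_radius_bounded a)). exists M. intro n.
  rewrite pow1, Rmult_1_r. apply Ha.
Qed.

Lemma geom_param_in_disk (b : nat -> R) M t :
  (forall n, Rabs (b n) <= M) -> 0 <= t -> Rbar_lt (Rabs (1 - exp (- t))) (CV_radius b).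
Proof.
  intros Hb Ht. pose proof (exp_neg_bounds t Ht).
  eapply Rbar_lt_le_trans; [|exact (CV_radius_ge_1 b M Hb)].
  simpl. rewrite Rabs_pos_eq; lra.
Qed.

Lemma geom_mix_0 (a : nat -> R) : geom_mix a 0 = a O.
Proof. unfold geom_mix. rewrite Ropp_0, exp_0, Rminus_diag, PSeries_0. ring. Qed.

Section GeomMix.

Variables (a aX aY : nat -> R) (M : R).
Hypotheses (a_bound : forall n, Rabs (a n) <= M)
  (aX_bound : forall n, Rabs (aX n) <= M) (aY_bound : forall n, Rabs (aY n) <= M).

Lemma is_series_geom_mix t :
  0 <= t -> is_series (fun n => exp (- t) * (1 - exp (- t)) ^ n * a n) (geom_mix a t).
Proof.
  intro Ht.
  pose proof (ex_series_Rabs _ (CV_disk_inside _ _ (geom_param_in_disk a M t a_bound Ht))) as Hex.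
  pose proof (is_series_scal_l (exp (- t)) _ _ (Series_correct _ Hex)) as H.
  eapply is_series_ext; [|exact H]. intro n. simpl. unfold scal. simpl. unfold mult. simpl. ring.
Qed.

Hypothesis a_recursion :
  forall n, INR (S n) * a (S n) = sum_f_R0 (fun j => aX j * aY (n - j)%nat) n.

Lemma is_derive_geom_mix t :
  0 <= t -> is_derive (geom_mix a) t (geom_mix aX t * geom_mix aY t - geom_mix a t).
Proof.
  intro Ht.
  assert (Hdu : is_derive (PSeries a) (1 - exp (- t))
      (PSeries aX (1 - exp (- t)) * PSeries aY (1 - exp (- t)))).
  { rewrite <- PSeries_mult by (apply (geom_param_in_disk _ M); assumption).
    rewrite <- (PSeries_ext (PS_derive a)) by
      (intro n; unfold PS_derive, PS_mult; rewrite <- a_recursion, Rmult_comm; reflexivity).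
    apply is_derive_PSeries, (geom_param_in_disk _ M); assumption. }
  assert (Hu : is_derive (fun s => 1 - exp (- s)) t (exp (- t))) by (auto_derive; auto; ring).
  assert (He : is_derive (fun s => exp (- s)) t (- exp (- t))) by (auto_derive; auto; ring).
  pose proof (is_derive_mult _ _ t _ _ He (is_derive_comp _ _ t _ _ Hdu Hu) Rmult_comm) as H.
  unfold geom_mix. refine (eq_ind _ (fun v => is_derive _ t v) H _ _).
  unfold plus, mult, scal. simpl. unfold mult. simpl. ring.
Qed.

End GeomMix.

Section ExplicitSolution.

Variables pX pY f0 : nat -> R.
Hypotheses (hX : is_density pX) (hY : is_density pY) (hf0 : is_density f0).

Definition qhat_solution (t z : R) : R :=
  geom_mix (fun n => qhat (pgf pX) (pgf pY) (pgf f0) n z) t.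

Lemma qhat_abs_le_1 n z : 0 <= z <= 1 -> Rabs (qhat (pgf pX) (pgf pY) (pgf f0) n z) <= 1.
Proof.
  intro Hz. destruct (is_pgf_of_mass_bounds _ _ z (qhat_is_pgf pX pY f0 n hX hY hf0) Hz).
  rewrite Rabs_pos_eq; lra.
Qed.

Lemma is_series_qhat_solution t z :
  0 <= t -> 0 <= z <= 1 ->
  is_series (fun n => exp (- t) * (1 - exp (- t)) ^ n * qhat (pgf pX) (pgf pY) (pgf f0) n z)
            (qhat_solution t z).
Proof. intros Ht Hz. apply (is_series_geom_mix _ 1); [intro n; now apply qhat_abs_le_1|exact Ht]. Qed.

Lemma qhat_solution_is_pgf t : 0 <= t -> is_pgf_of_mass 1 (qhat_solution t).
Proof.
  intro Ht.
  apply (is_pgf_of_mass_ext 1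
    (fun z => Series (fun n => exp (- t) * (1 - exp (- t)) ^ n * qhat (pgf pX) (pgf pY) (pgf f0) n z))).
  - intros z Hz. now apply is_series_unique, is_series_qhat_solution.
  - apply is_pgf_of_mass_mix; [|now apply is_series_geom_weights|].
    + intro n. pose proof (exp_neg_bounds t Ht). apply Rmult_le_pos; [lra|apply pow_le; lra].
    + intro n. now apply qhat_is_pgf.
Qed.

Lemma is_derive_qhat_solution t z :
  0 <= t -> 0 <= z <= 1 ->
  is_derive (fun s => qhat_solution s z) t
    (qhat_solution t (pgf pX z) * qhat_solution t (pgf pY z) - qhat_solution t z).
Proof.
  intros Ht Hz. unfold qhat_solution.
  apply (is_derive_geom_mix _ _ _ 1); [| | |intro n; rewrite qhat_S; field; apply not_0_INR; lia|exact Ht];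
    intro n; apply qhat_abs_le_1; [exact Hz|now apply pgf_unit_interval..].
Qed.

Lemma qhat_solution_is_solution : is_solution (pgf pX) (pgf pY) (pgf f0) qhat_solution.
Proof.
  split; [|split; [|split]].
  - intros z _. apply geom_mix_0.
  - intros z Hz. eapply filterlim_filter_le_1; [apply filter_le_within|].
    apply (ex_derive_continuous (fun t => qhat_solution t z)).
    eexists. apply is_derive_qhat_solution; [lra|exact Hz].
  - intros t z Ht Hz. apply is_derive_qhat_solution; [lra|exact Hz].
  - intros T _. exists 1. intros t z Ht Hz.
    destruct (is_pgf_of_mass_bounds _ _ z (qhat_solution_is_pgf t (proj1 Ht)) Hz).
    rewrite Rabs_pos_eq; lra.
Qed.

End ExplicitSolution.

(** * Uniqueness *)

Lemma Rabs_sub_le_of_derive_bound (f df : R -> R) a b L :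
  a <= b -> filterlim f (at_right a) (locally (f a)) ->
  (forall x, a < x <= b -> is_derive f x (df x)) ->
  (forall x, a < x <= b -> Rabs (df x) <= L) ->
  Rabs (f b - f a) <= L * (b - a).
Proof.
  intros Hab Hcont Hder Hbound.
  destruct Hab as [Hab|<-]; [|rewrite !Rminus_diag, Rabs_R0, Rmult_0_r; lra].
  assert (HL : 0 <= L) by (eapply Rle_trans; [apply Rabs_pos|apply (Hbound b)]; lra).
  apply (closed_filterlim_loc f (fun y => Rabs (f b - y) <= L * (b - a)) (f a) Hcont).
  - exists (mkposreal _ (proj2 (Rlt_0_minus a b) Hab)). intros e He Hae.
    change (Rabs (e - a) < b - a) in He. rewrite Rabs_pos_eq in He by lra.
    destruct (MVT_gen f e b df) as [c [Hc Hfc]].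
    + intros x Hx. rewrite Rmin_left, Rmax_right in Hx by lra. apply Hder. lra.
    + intros x Hx. rewrite Rmin_left, Rmax_right in Hx by lra.
      apply continuity_pt_filterlim, (ex_derive_continuous f). eexists. apply Hder. lra.
    + rewrite Rmin_left, Rmax_right in Hc by lra. simpl.
      rewrite Hfc, Rabs_mult, (Rabs_pos_eq (b - e)) by lra.
      apply Rmult_le_compat; [apply Rabs_pos|lra|apply Hbound; lra|lra].
  - apply (closed_comp (fun y => Rabs (f b - y)) (fun u => u <= L * (b - a))); [|apply closed_le].
    intro y. apply continuous_Rabs_comp, (continuous_minus (fun _ => f b) (fun y => y));
      [apply continuous_const|apply continuous_id].
Qed.

Lemma Rabs_mul_sub_mul_le x1 y1 x2 y2 d M B :
  Rabs (x1 - x2) <= B -> Rabs (y1 - y2) <= B -> Rabs y1 <= M -> Rabs x2 <= M -> Rabs d <= B ->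
  Rabs (x1 * y1 - x2 * y2 - d) <= (2 * M + 1) * B.
Proof.
  intros Hx Hy Hy1 Hx2 Hd.
  replace (x1 * y1 - x2 * y2 - d) with ((x1 - x2) * y1 + x2 * (y1 - y2) + - d) by ring.
  eapply Rle_trans; [apply Rabs_triang|]. eapply Rle_trans; [apply Rplus_le_compat_r, Rabs_triang|].
  rewrite !Rabs_mult, Rabs_Ropp.
  pose proof (Rabs_pos (x1 - x2)). pose proof (Rabs_pos (y1 - y2)).
  pose proof (Rabs_pos y1). pose proof (Rabs_pos x2). nra.
Qed.

Lemma is_solution_right_cont phX phY f0h G a z :
  is_solution phX phY f0h G -> 0 <= a -> 0 <= z <= 1 ->
  filterlim (fun t => G t z) (at_right a) (locally (G a z)).
Proof.
  intros [_ [Hcont0 [Hder _]]] Ha Hz.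
  destruct Ha as [Ha|<-]; [|now apply Hcont0].
  eapply filterlim_filter_le_1; [apply filter_le_within|].
  apply (ex_derive_continuous (fun t => G t z)). eexists. now apply Hder.
Qed.

Section Uniqueness.

Variables (phX phY f0h : R -> R) (G1 G2 : R -> R -> R) (T M : R).
Hypotheses (phX_unit : forall z, 0 <= z <= 1 -> 0 <= phX z <= 1)
  (phY_unit : forall z, 0 <= z <= 1 -> 0 <= phY z <= 1)
  (G1_sol : is_solution phX phY f0h G1) (G2_sol : is_solution phX phY f0h G2)
  (M_ge0 : 0 <= M)
  (G1_bound : forall t z, 0 <= t <= T -> 0 <= z <= 1 -> Rabs (G1 t z) <= M)
  (G2_bound : forall t z, 0 <= t <= T -> 0 <= z <= 1 -> Rabs (G2 t z) <= M).

Let D (s z : R) : R := G1 s z - G2 s z.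

Let h : R := / (2 * (2 * M + 1)).

Lemma solution_diff_strip_contraction a B :
  0 <= a -> (forall z, 0 <= z <= 1 -> D a z = 0) ->
  (forall s z, a <= s <= a + h -> s <= T -> 0 <= z <= 1 -> Rabs (D s z) <= B) ->
  forall s z, a <= s <= a + h -> s <= T -> 0 <= z <= 1 -> Rabs (D s z) <= B / 2.
Proof.
  intros Ha HDa HB s z Hs HsT Hz.
  assert (HB0 : 0 <= B) by (eapply Rle_trans; [apply Rabs_pos|apply (HB a z)]; lra).
  assert (Hcont : filterlim (fun r => D r z) (at_right a) (locally (D a z))).
  { unfold D, Rminus. apply (filterlim_comp_2 _ _ Rplus
             (is_solution_right_cont _ _ _ _ a z G1_sol Ha Hz)
             (filterlim_comp _ _ _ _ Ropp _ _ _ (is_solution_right_cont _ _ _ _ a z G2_sol Ha Hz)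
                             (filterlim_opp (G2 a z)))).
    exact (filterlim_plus (K := R_AbsRing) (G1 a z) (- G2 a z)). }
  pose proof (Rabs_sub_le_of_derive_bound (fun r => D r z)
    (fun r => (G1 r (phX z) * G1 r (phY z) - G1 r z) - (G2 r (phX z) * G2 r (phY z) - G2 r z))
    a s ((2 * M + 1) * B) (proj1 Hs) Hcont) as Hlip.
  cbv beta in Hlip. rewrite HDa, Rminus_0_r in Hlip by exact Hz.
  eapply Rle_trans; [apply Hlip|].
  - intros r Hr. apply (is_derive_minus (fun r => G1 r z) (fun r => G2 r z));
      [apply G1_sol|apply G2_sol]; (lra || exact Hz).
  - intros r Hr.
    replace (G1 r (phX z) * G1 r (phY z) - G1 r z - (G2 r (phX z) * G2 r (phY z) - G2 r z))
      with (G1 r (phX z) * G1 r (phY z) - G2 r (phX z) * G2 r (phY z) - D r z) by (unfold D; ring).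
    apply Rabs_mul_sub_mul_le; [apply HB|apply HB|apply G1_bound|apply G2_bound|apply HB];
      (lra || auto).
  - unfold h in Hs. replace (B / 2) with ((2 * M + 1) * B * / (2 * (2 * M + 1))) by (field; lra).
    apply Rmult_le_compat_l; [apply Rmult_le_pos; lra|lra].
Qed.

Lemma solution_diff_zero_on_strip a :
  0 <= a -> (forall z, 0 <= z <= 1 -> D a z = 0) ->
  forall s z, a <= s <= a + h -> s <= T -> 0 <= z <= 1 -> D s z = 0.
Proof.
  intros Ha HDa s z Hs HsT Hz.
  assert (Hgeom : forall n s z, a <= s <= a + h -> s <= T -> 0 <= z <= 1 ->
                    Rabs (D s z) <= 2 * M * (/ 2) ^ n).
  { induction n as [|n IH]; intros s' z' Hs' Hs'T Hz'.
    - rewrite pow_O, Rmult_1_r. unfold D, Rminus.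
      eapply Rle_trans; [apply Rabs_triang|]. rewrite Rabs_Ropp.
      assert (Rabs (G1 s' z') <= M) by (apply G1_bound; lra).
      assert (Rabs (G2 s' z') <= M) by (apply G2_bound; lra). lra.
    - replace (2 * M * (/ 2) ^ S n) with (2 * M * (/ 2) ^ n / 2) by (simpl; field).
      now apply (solution_diff_strip_contraction a). }
  assert (Hlim : is_lim_seq (fun n => 2 * M * (/ 2) ^ n) 0).
  { replace (Finite 0) with (Rbar_mult (2 * M) 0) by (simpl; f_equal; ring).
    apply is_lim_seq_scal_l, is_lim_seq_geom. rewrite Rabs_pos_eq; lra. }
  assert (Habs : Rabs (D s z) <= 0).
  { apply (is_lim_seq_le (fun _ => Rabs (D s z)) _ _ _ (fun n => Hgeom n s z Hs HsT Hz)
             (is_lim_seq_const _) Hlim). }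
  pose proof (Rle_abs (D s z)). pose proof (Rle_abs (- D s z)). rewrite Rabs_Ropp in *. lra.
Qed.

Lemma solution_diff_zero t z : 0 <= t <= T -> 0 <= z <= 1 -> D t z = 0.
Proof.
  intros Ht Hz.
  assert (Hh : 0 < h) by (apply Rinv_0_lt_compat; lra).
  assert (Hstrips : forall k s z, 0 <= s <= INR k * h -> s <= T -> 0 <= z <= 1 -> D s z = 0).
  { clear t z Ht Hz. induction k as [|k IH]; intros s z Hs HsT Hz.
    - replace s with 0 by (simpl in Hs; lra).
      unfold D. rewrite (proj1 G1_sol), (proj1 G2_sol) by exact Hz. ring.
    - destruct (Rle_or_lt s (INR k * h)) as [Hsk|Hsk]; [apply IH; lra|].
      rewrite S_INR in Hs.
      assert (0 <= INR k * h) by (apply Rmult_le_pos; [apply pos_INR|lra]).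
      apply (solution_diff_zero_on_strip (INR k * h)); try lra.
      intros z' Hz'. apply IH; lra. }
  destruct (INR_unbounded (T / h)) as [k Hk].
  apply (Hstrips k); try lra.
  apply Rmult_lt_compat_r with (r := h) in Hk; [|exact Hh].
  unfold Rdiv in Hk. rewrite Rmult_assoc, Rinv_l in Hk; lra.
Qed.

End Uniqueness.

Lemma is_solution_unique phX phY f0h G1 G2 :
  (forall z, 0 <= z <= 1 -> 0 <= phX z <= 1) -> (forall z, 0 <= z <= 1 -> 0 <= phY z <= 1) ->
  is_solution phX phY f0h G1 -> is_solution phX phY f0h G2 ->
  forall t z, 0 <= t -> 0 <= z <= 1 -> G1 t z = G2 t z.
Proof.
  intros HphX HphY HG1 HG2 t z Ht Hz.
  destruct (proj2 (proj2 (proj2 HG1)) (t + 1)) as [M1 HM1]; [lra|].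
  destruct (proj2 (proj2 (proj2 HG2)) (t + 1)) as [M2 HM2]; [lra|].
  set (M := Rmax (Rmax M1 M2) 0).
  assert (HM1M : M1 <= M) by (unfold M; eapply Rle_trans; [apply Rmax_l|apply Rmax_l]).
  assert (HM2M : M2 <= M) by (unfold M; eapply Rle_trans; [apply Rmax_r|apply Rmax_l]).
  apply Rminus_diag_uniq.
  apply (solution_diff_zero phX phY f0h G1 G2 (t + 1) M); auto; try lra.
  - apply Rmax_r.
  - intros s z' Hs Hz'. eapply Rle_trans; [apply HM1|]; auto.
  - intros s z' Hs Hz'. eapply Rle_trans; [apply HM2|]; auto.
Qed.

Theorem proposition3p1 (pX pY f0 : nat -> R)
  (hX : is_density pX) (hY : is_density pY) (hf0 : is_density f0)
  (hX0 : pX 0%nat <> 1) (hY0 : pY 0%nat <> 1) :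
  exists F : R -> R -> R,
    is_solution (pgf pX) (pgf pY) (pgf f0) F /\
    (forall G : R -> R -> R, is_solution (pgf pX) (pgf pY) (pgf f0) G ->
       forall t z, 0 <= t -> 0 <= z <= 1 -> G t z = F t z) /\
    (forall t z, 0 < t -> 0 <= z <= 1 ->
       is_series (fun n => exp (- t) * (1 - exp (- t)) ^ n *
                           qhat (pgf pX) (pgf pY) (pgf f0) n z) (F t z)) /\
    (forall t, 0 < t -> exists g : nat -> R,
       is_density g /\ forall z, 0 <= z <= 1 -> F t z = pgf g z).
Proof.
  exists (qhat_solution pX pY f0).
  split; [|split; [|split]].
  - now apply qhat_solution_is_solution.
  - intros G HG t z Ht Hz.
    apply (is_solution_unique (pgf pX) (pgf pY) (pgf f0)); auto using qhat_solution_is_solution;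
      intros; now apply pgf_unit_interval.
  - intros t z Ht Hz. apply is_series_qhat_solution; auto; lra.
  - intros t Ht. destruct (qhat_solution_is_pgf pX pY f0 hX hY hf0 t) as [g [Hg0 [Hg1 Hg]]]; [lra|].
    now exists g.
Qed.
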